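(* Let $F_n$ be the free group on $A_n=\{a_1,\dots,a_n\}$, and endow the category of $F_n$-sets with the closed model structure whose weak equivalences are the $F_n$-maps $f:X\to Y$ such that for all $p\ge1$ composition with $C(f)$ is a bijection $\mathrm{Hom}_{\mathrm{Gph}}(c_p,C(X,A_n,F_n))\to\mathrm{Hom}_{\mathrm{Gph}}(c_p,C(Y,A_n,F_n))$, whose fibrations are all morphisms, and whose cofibrations are the maps with the left lifting property with respect to all weak equivalences. Then an $F_n$-set $X$ is cofibrant (i.e. $\emptyset\to X$ is a cofibration) if and only if $X\in R_n$, that is, its Cayley graph $C(X,A_n,F_n)$ is obtained by attaching a forest to a disjoint union of directed cycles: every connected component $K$ of $C(X,A_n,F_n)$ contains a subgraph isomorphic to some $c_p$ ($p\ge1$) such that removing the arcs of this subgraph from $K$ leaves a forest (in the underlying undirected sense) each of whose trees contains exactly one node of that subgraph.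
   Context: A directed graph consists of nodes, arcs and source/target maps; $\mathrm{Gph}$ is the category of directed graphs. For $p\ge1$, $c_p$ is the directed graph with nodes $\mathbb{Z}/p\mathbb{Z}$ and exactly one arc from $[n]$ to $[n+1]$ for each $[n]$. For an $F_n$-set $X$, $C(X,A_n,F_n)$ is the directed Cayley graph with node set $X$, arc set $X\times A_n$, source $(x,a)\mapsto x$, target $(x,a)\mapsto a\cdot x$. Connected components are those of the underlying undirected graph. *)

From mathcomp Require Import all_boot.
Set Implicit Arguments. Unset Strict Implicit. Unset Printing Implicit Defensive.

Record Gph := { node : Type; arc : Type; src : arc -> node; tgt : arc -> node }.

Definition is_ghom (G H : Gph) (fn : node G -> node H) (fa : arc G -> arc H) :=
  forall e, src (fa e) = fn (src e) /\ tgt (fa e) = fn (tgt e).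

(* The map Hom_Gph(C, G) -> Hom_Gph(C, H), phi |-> g o phi, is a bijection
   (homs are pairs of functions, compared pointwise). *)
Definition postcomp_bij (C G H : Gph) (gn : node G -> node H) (ga : arc G -> arc H) :=
  (forall (phn psn : node C -> node G) (pha psa : arc C -> arc G),
      is_ghom phn pha -> is_ghom psn psa ->
      (forall v, gn (phn v) = gn (psn v)) -> (forall e, ga (pha e) = ga (psa e)) ->
      (forall v, phn v = psn v) /\ (forall e, pha e = psa e)) /\
  (forall (chn : node C -> node H) (cha : arc C -> arc H), is_ghom chn cha ->
      exists (phn : node C -> node G) (pha : arc C -> arc G),
        is_ghom phn pha /\ (forall v, gn (phn v) = chn v) /\ (forall e, ga (pha e) = cha e)).

Definition cyc (p : nat) : Gph :=
  {| node := 'I_p; arc := 'I_p; src := fun k => k; tgt := fun k => ordS k |}.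

(* An F_n-set, F_n free on A_n = {a_1..a_n} (indexed by 'I_n), is given by the
   action of the free generators: n bijections of the carrier. *)
Record FnSet (n : nat) := {
  carrier : Type;
  act : 'I_n -> carrier -> carrier;
  act_bij : forall a, bijective (act a) }.

Definition equivariant n (X Y : FnSet n) (f : carrier X -> carrier Y) :=
  forall (a : 'I_n) x, f (act a x) = act a (f x).

Definition Cay n (X : FnSet n) : Gph :=
  {| node := carrier X; arc := (carrier X * 'I_n)%type;
     src := fun e => e.1; tgt := fun e => act e.2 e.1 |}.

Definition Cay_arc n (X Y : FnSet n) (f : carrier X -> carrier Y)
  : arc (Cay X) -> arc (Cay Y) := fun e => (f e.1, e.2).

Definition weq n (X Y : FnSet n) (f : carrier X -> carrier Y) :=
  forall p, 0 < p -> @postcomp_bij (cyc p) (Cay X) (Cay Y) f (Cay_arc f).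

(* cofibrations: LLP w.r.t. all weak equivalences (= trivial fibrations,
   fibrations being all morphisms) *)
Definition cofibration n (X Y : FnSet n) (i : carrier X -> carrier Y) :=
  forall (A B : FnSet n) (q : carrier A -> carrier B),
    equivariant q -> weq q ->
    forall (u : carrier X -> carrier A) (v : carrier Y -> carrier B),
      equivariant u -> equivariant v -> (forall x, q (u x) = v (i x)) ->
      exists h : carrier Y -> carrier A,
        equivariant h /\ (forall x, h (i x) = u x) /\ (forall y, q (h y) = v y).

Definition emptyFn (n : nat) : FnSet n :=
  {| carrier := Empty_set; act := fun _ x => x;
     act_bij := fun _ => Bijective (fun x : Empty_set => erefl x) (fun x => erefl x) |}.

Definition cofibrant n (X : FnSet n) :=
  @cofibration n (emptyFn n) X (fun e : Empty_set => match e with end).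

Definition links (G : Gph) (e : arc G) (x y : node G) :=
  (src e = x /\ tgt e = y) \/ (src e = y /\ tgt e = x).

Inductive connected (G : Gph) (S : arc G -> Prop) : node G -> node G -> Prop :=
| conn_refl x : connected S x x
| conn_step x y z (e : arc G) : S e -> links e x y -> connected S y z -> connected S x z.

Definition has_cycle (G : Gph) (S : arc G -> Prop) :=
  exists (m : nat) (v : nat -> node G) (e : nat -> arc G),
    0 < m /\ v m = v 0 /\
    (forall i, i < m -> S (e i) /\ links (e i) (v i) (v i.+1)) /\
    (forall i j, i < j -> j < m -> e i <> e j /\ v i <> v j).

Definition in_Rn n (X : FnSet n) :=
  forall x0 : carrier X,
    let K := fun y : node (Cay X) => @connected (Cay X) (fun _ => True) x0 y in
    exists (p : nat) (phn : node (cyc p) -> node (Cay X)) (pha : arc (cyc p) -> arc (Cay X)),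
      0 < p /\ is_ghom phn pha /\ injective phn /\ injective pha /\
      (forall k, K (phn k)) /\
      let S := fun e : arc (Cay X) => K (src e) /\ ~ (exists k, pha k = e) in
      ~ @has_cycle (Cay X) S /\
      (forall y, K y -> exists k, @connected (Cay X) S y (phn k) /\
                          forall k', @connected (Cay X) S y (phn k') -> phn k' = phn k).

(* Cofibrant => R_n.  A component K without closed walk would make the inclusion
   of its complement a weak equivalence that id_X cannot lift across
   ([cofibrant_comp_cycle]).  The necklace F_n-set [Neck] has one labelled cycle
   per primitive necklace word, with free trees attached; [Neck -> 1] is a weak
   equivalence ([neck_weq]) since a periodic label sequence reads exactly one
   necklace ([reads_unique], [reads_exists]).  Lifting [X -> 1] gives
   [g : X -> Neck]; the closed walk of K follows a necklace, its first return
   gives an embedded cycle, and the tree height of [g y] makes the other arcs of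
   K a forest rooted on it ([comp_cycle_forest]).
   R_n => cofibrant.  On each component the lift is chosen on the cycle (the
   surjectivity part of the weak equivalence) and propagated along parent arcs of
   the forest, which are unique by acyclicity ([parent_arc_unique], [lift_act]);
   component lifts are glued by choice ([glue_comp_lifts]). *)

From mathcomp Require Import all_boot zify.
From Stdlib Require Import Classical ClassicalEpsilon FunctionalExtensionality PropExtensionality.
(* [Defs] is imported last so that its [arc] shadows the one of [path]. *)
From Pilot Require Import Defs.
Set Implicit Arguments. Unset Strict Implicit. Unset Printing Implicit Defensive.

Lemma least_ex (P : nat -> Prop) : (exists n, P n) -> exists n, P n /\ forall m, P m -> n <= m.
Proof.
move=> [n Pn]; apply: NNPP => Hno.
have H : forall k, forall m, m <= k -> ~ P m.
  elim=> [|k IH] m Hm Pm.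
    apply: Hno; exists m; split=> // m' _; move: Hm; rewrite leqn0 => /eqP->; done.
  apply: Hno; exists m; split=> // m' Pm'.
  case: (leqP m m') => // Hlt; exfalso; apply: (IH m') => //; lia.
exact: (H n n (leqnn n) Pn).
Qed.

(* [minnat P]: the least natural number satisfying [P] (0 if there is none). *)
Definition minnat (P : nat -> Prop) : nat :=
  match excluded_middle_informative (exists n, P n) with
  | left h => proj1_sig (constructive_indefinite_description _ (least_ex h))
  | right _ => 0
  end.

Lemma minnat_spec (P : nat -> Prop) :
  (exists n, P n) -> P (minnat P) /\ forall m, P m -> minnat P <= m.
Proof.
move=> h; rewrite /minnat; case: excluded_middle_informative => // h'.
by case: (constructive_indefinite_description _ _).
Qed.

Definition pickopt (T : Type) (P : T -> Prop) : option T :=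
  match excluded_middle_informative (exists x, P x) with
  | left h => Some (proj1_sig (constructive_indefinite_description _ h))
  | right _ => None
  end.

Lemma pickoptP (T : Type) (P : T -> Prop) :
  (exists x, P x) -> exists x, pickopt P = Some x /\ P x.
Proof.
move=> h; rewrite /pickopt; case: excluded_middle_informative => // h'.
case: (constructive_indefinite_description _ _) => x Px; by exists x.
Qed.

Lemma pickoptS (T : Type) (P : T -> Prop) x : pickopt P = Some x -> P x.
Proof.
rewrite /pickopt; case: excluded_middle_informative => // h.
case: (constructive_indefinite_description _ _) => y Py /= [<-] //.
Qed.

Lemma choice_congr (T : Type) (P Q : T -> Prop) (e : P = Q)
    (p : exists x, P x) (q : exists x, Q x) :
  proj1_sig (constructive_indefinite_description _ p)
  = proj1_sig (constructive_indefinite_description _ q).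
Proof. subst Q; by rewrite (proof_irrelevance _ p q). Qed.

Lemma sig_eq (T : Type) (P : T -> Prop) (x y : {t | P t}) : sval x = sval y -> x = y.
Proof.
case: x => x px; case: y => y py /= e; subst y; by rewrite (proof_irrelevance _ px py).
Qed.

Lemma nonincr_closed_const (f : nat -> nat) m :
  (forall i, i < m -> f i.+1 <= f i) -> f m = f 0 -> forall i, i < m -> f i.+1 = f i.
Proof.
move=> h e.
have mono : forall j, j <= m -> forall i, i <= j -> f j <= f i.
  elim=> [|j IH] jm i ij; first by move: ij; rewrite leqn0 => /eqP ->.
  case: (ltngtP i j.+1) ij => // [ij|->] _; last by [].
  apply: leq_trans (h j jm) (IH (ltnW jm) i _); lia.
move=> i im; apply/eqP; rewrite eqn_leq (h i im) /=.
have a1 := mono m (leqnn m) i.+1 im; have a2 := mono i (ltnW im) 0 (leq0n _).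
by rewrite -e in a2; apply: leq_trans a2 a1.
Qed.

Lemma nondecr_closed_const (f : nat -> nat) m :
  (forall i, i < m -> f i <= f i.+1) -> f m = f 0 -> forall i, i < m -> f i.+1 = f i.
Proof.
move=> h e.
have mono : forall j, j <= m -> forall i, i <= j -> f i <= f j.
  elim=> [|j IH] jm i ij; first by move: ij; rewrite leqn0 => /eqP ->.
  case: (ltngtP i j.+1) ij => // [ij|->] _; last by [].
  apply: leq_trans (IH (ltnW jm) i _) (h j jm); lia.
move=> i im; apply/eqP; rewrite eqn_leq (h i im) andbT.
have a1 := mono m (leqnn m) i.+1 im; have a2 := mono i (ltnW im) 0 (leq0n _).
by rewrite -e in a2; apply: leq_trans a1 a2.
Qed.

Lemma argmax_nat (f : nat -> nat) M :
  0 < M -> exists i0, i0 < M /\ forall i, i < M -> f i <= f i0.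
Proof.
elim: M => // M IH _; case: (posnP M) => [->|Mp].
  by exists 0; split=> // i; rewrite ltnS leqn0 => /eqP ->.
have [i0 [i0M h]] := IH Mp; case: (leqP (f M) (f i0)) => hM.
  exists i0; split; first lia.
  move=> i; rewrite ltnS leq_eqVlt => /orP [/eqP ->|]; [exact: hM|exact: h].
exists M; split=> // i; rewrite ltnS leq_eqVlt => /orP [/eqP ->|iM] //.
exact: leq_trans (h i iM) (ltnW hM).
Qed.

Lemma bij_ex (T : Type) (f : T -> T) : bijective f -> exists g, cancel f g /\ cancel g f.
Proof. by case=> g h1 h2; exists g. Qed.

Definition ainv n (X : FnSet n) (a : 'I_n) : carrier X -> carrier X :=
  proj1_sig (constructive_indefinite_description _ (bij_ex (act_bij X a))).

Lemma actK n (X : FnSet n) a : cancel (@act n X a) (ainv a).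
Proof. rewrite /ainv; case: (constructive_indefinite_description _ _) => g [] //. Qed.
Lemma ainvK n (X : FnSet n) a : cancel (ainv a) (@act n X a).
Proof. rewrite /ainv; case: (constructive_indefinite_description _ _) => g [] //. Qed.
Lemma act_inj n (X : FnSet n) a : injective (@act n X a).
Proof. exact: can_inj (@actK n X a). Qed.

Lemma equiv_ainv n (X Y : FnSet n) (f : carrier X -> carrier Y) :
  equivariant f -> forall a x, f (ainv a x) = ainv a (f x).
Proof. move=> hf a x; apply: (@act_inj _ Y a); by rewrite -hf !ainvK. Qed.

Lemma links_sym (G : Gph) (e : arc G) x y : links e x y -> links e y x.
Proof. by rewrite /links; case=> h; [right|left]. Qed.

Lemma links_uniq (G : Gph) (e : arc G) x y x' y' : links e x y -> links e x' y' ->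
  (x = x' /\ y = y') \/ (x = y' /\ y = x').
Proof. rewrite /links; case=> [[<- <-]|[<- <-]]; case=> [[-> ->]|[-> ->]]; auto. Qed.

Lemma conn_trans (G : Gph) (S : arc G -> Prop) x y z :
  connected S x y -> connected S y z -> connected S x z.
Proof. elim=> // x1 y1 z1 e Se l _ IH h; exact: conn_step Se l (IH h). Qed.

Lemma conn1 (G : Gph) (S : arc G -> Prop) e x y : S e -> links e x y -> connected S x y.
Proof. move=> Se l; exact: conn_step Se l (conn_refl _ _). Qed.

(* A closed walk of length [M] with pairwise distinct vertices is a cycle; when
   [M = 2] the two arcs must also differ, otherwise the walk goes back and forth. *)
Lemma mk_cycle (G : Gph) (S : arc G -> Prop) (M : nat) (Q : nat -> node G) (E : nat -> arc G) :
  0 < M -> Q M = Q 0 -> (forall i, i < M -> S (E i) /\ links (E i) (Q i) (Q i.+1)) ->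
  (forall i j, i < j -> j < M -> Q i <> Q j) -> (M = 2 -> E 0 <> E 1) -> has_cycle S.
Proof.
move=> M0 QM hE hQ h2; exists M, Q, E; split=> //; split=> //; split=> // i j ij jM.
split; last exact: hQ.
move=> Eij; have [_ li] := hE i (ltn_trans ij jM); have [_ lj] := hE j jM.
rewrite Eij in li; case: (links_uniq li lj) => [[h _]|[h1 h2']]; first exact: hQ ij jM h.
have [jM1|jM1] : j.+1 < M \/ j.+1 = M by lia.
  by apply: (hQ i j.+1) => //; lia.
rewrite jM1 QM in h1.
have i0 : i = 0.
  case: (posnP i) => // ip; exfalso; apply: (hQ 0 i) => //; lia.
subst i.
have j1 : j = 1.
  case: (ltngtP j 1) => // jp; first lia.
  exfalso; apply: (hQ 1 j) => //; lia.
subst j; apply: h2 => //; lia.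
Qed.

Definition periodic (T : Type) (f : nat -> T) r := forall i, f (r + i) = f i.

Lemma periodic_mul (T : Type) (f : nat -> T) r c : periodic f r -> forall i, f (c * r + i) = f i.
Proof. move=> h; elim: c => [|c IH] i //; by rewrite mulSn -addnA h IH. Qed.

Lemma periodic_modv (T : Type) (f : nat -> T) r :
  periodic f r -> 0 < r -> forall i, f i = f (i %% r).
Proof. move=> h r0 i; by rewrite {1}(divn_eq i r) periodic_mul. Qed.

Lemma periodic_mod (T : Type) (f : nat -> T) r q :
  periodic f r -> periodic f q -> 0 < r -> periodic f (q %% r).
Proof. move=> hr hq r0 i; rewrite -(hq i) {2}(divn_eq q r) -addnA periodic_mul //. Qed.

Lemma periodic_shift (T : Type) (f : nat -> T) k r p : 0 < p -> periodic f p ->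
  (forall i, f (k + i) = f (k + r + i)) -> periodic f r.
Proof.
move=> p0 hp h j.
have E1 : f j = f (k + (p.-1 * k + j)) by rewrite -(periodic_mul k hp j); congr f; nia.
have E2 : f (r + j) = f (k + r + (p.-1 * k + j)).
  by rewrite -(periodic_mul k hp (r + j)); congr f; nia.
by rewrite E1 E2 h.
Qed.

Lemma periodic_transfer (T : Type) (f g : nat -> T) k k' p q : 0 < p -> periodic f p ->
  periodic g q -> (forall i, f (k + i) = g (k' + i)) -> periodic f q.
Proof.
move=> p0 hp hq hfg; apply: (periodic_shift (k := k) p0 hp) => i.
by rewrite hfg -addnA hfg addnCA hq.
Qed.

(* A nonempty word [R] over [A_n] is read cyclically by [cword R];
   [R'] is conjugate to [R] when it is a rotation of [R].  A necklace is a
   primitive word (no proper period) that is the chosen representative [canon]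
   of its conjugacy class. *)

Section Necklaces.
Variables (n : nat) (d0 : 'I_n).

Definition cword (R : seq 'I_n) i := nth d0 R (i %% size R).

Lemma cword_eqmod R i j : i = j %[mod size R] -> cword R i = cword R j.
Proof. by rewrite /cword => ->. Qed.

Lemma cword_periodic R : 0 < size R -> periodic (cword R) (size R).
Proof. move=> p0 i; apply: cword_eqmod; by rewrite modnDl. Qed.

Definition rotb R R' s :=
  (size R' == size R) && all (fun i => cword R' i == cword R (s + i)) (iota 0 (size R)).

Lemma rotbP R R' s : 0 < size R ->
  reflect (size R' = size R /\ forall i, cword R' i = cword R (s + i)) (rotb R R' s).
Proof.
move=> p0; rewrite /rotb; apply: (iffP andP) => [[/eqP sz /allP h]|[sz h]]; split=> //.
- move=> i; have ip : i %% size R \in iota 0 (size R) by rewrite mem_iota ltn_pmod.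
  move/eqP: (h _ ip); rewrite (@cword_eqmod R' (i %% size R) i) ?sz ?modn_mod // => ->.
  apply: cword_eqmod; by rewrite modnDmr.
- by rewrite sz.
- by apply/allP => i _; rewrite h.
Qed.

Definition conjb R R' := has (rotb R R') (iota 0 (size R)).

Lemma conjbP R R' : 0 < size R ->
  reflect (size R' = size R /\ exists s, forall i, cword R' i = cword R (s + i)) (conjb R R').
Proof.
move=> p0; apply: (iffP hasP) => [[s _ /(rotbP _ _ p0) [sz h]]|[sz [s h]]].
  by split=> //; exists s.
exists (s %% size R); first by rewrite mem_iota ltn_pmod.
apply/rotbP => //; split=> // i; rewrite h; apply: cword_eqmod; by rewrite modnDml.
Qed.

Definition primitiveb R := all (fun r => ~~ rotb R R r) (iota 1 (size R).-1).

Lemma primitivebP R : 0 < size R ->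
  reflect (forall r, 0 < r < size R -> ~ periodic (cword R) r) (primitiveb R).
Proof.
move=> p0; apply: (iffP allP) => [h r /andP [r0 rp] hr|h r].
  have : r \in iota 1 (size R).-1 by rewrite mem_iota; lia.
  move/h => /negP; apply; apply/rotbP => //; split=> // i; by rewrite hr.
rewrite mem_iota => /andP [rr1 rr2]; apply/negP => /(rotbP _ _ p0) [_ hr].
apply: (h r); first by clear -rr1 rr2 p0; lia.
by move=> i; rewrite -hr.
Qed.

Definition canon R := choose (conjb R) R.
Definition necklace R := (0 < size R) && primitiveb R && (canon R == R).

Lemma conj_refl R : 0 < size R -> conjb R R.
Proof. move=> p0; apply/conjbP => //; split=> //; by exists 0. Qed.

Lemma conj_size R R' : 0 < size R -> conjb R R' -> size R' = size R.
Proof. by move=> p0 /(conjbP _ p0) []. Qed.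

Lemma conj_sym R R' : 0 < size R -> conjb R R' -> conjb R' R.
Proof.
move=> p0 /(conjbP _ p0) [sz [s h]]; have p0' : 0 < size R' by rewrite sz.
apply/conjbP => //; split=> //; exists (size R - s %% size R) => i.
rewrite h; apply: cword_eqmod.
have hlt := ltn_pmod s p0.
have e := divn_eq s (size R).
have -> : s + (size R - s %% size R + i) = (s %/ size R).+1 * size R + i.
  rewrite mulSn; move: e hlt; set a := s %/ size R * size R; set b := s %% size R; lia.
by rewrite modnMDl.
Qed.

Lemma conj_trans R R' R'' : 0 < size R -> conjb R R' -> conjb R' R'' -> conjb R R''.
Proof.
move=> p0 /(conjbP _ p0) [sz [s h]]; have p0' : 0 < size R' by rewrite sz.
move=> /(conjbP _ p0') [sz' [s' h']]; apply/conjbP => //; split; first by rewrite sz'.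
exists (s + s') => i; by rewrite h' h addnA.
Qed.

Lemma canon_eq R R' : 0 < size R -> conjb R R' -> canon R = canon R'.
Proof.
move=> p0 c; have p0' : 0 < size R' by rewrite (conj_size p0 c).
rewrite /canon (@eq_choose _ (conjb R) (conjb R')); last first.
  move=> x; apply/idP/idP => h; [exact: conj_trans (conj_sym p0 c) h|exact: conj_trans c h].
apply: choose_id; [exact: conj_sym|exact: conj_refl].
Qed.

Lemma canon_conj R : 0 < size R -> conjb R (canon R).
Proof. move=> p0; apply: chooseP; exact: conj_refl. Qed.

Lemma primitive_conj R R' : 0 < size R -> conjb R R' -> primitiveb R -> primitiveb R'.
Proof.
move=> p0 c /(primitivebP p0) pr; have sz := conj_size p0 c.
have p0' : 0 < size R' by rewrite sz.
have /(conjbP _ p0') [_ [t ht]] := conj_sym p0 c.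
apply/primitivebP => // r rr hr; apply: (pr r); first by rewrite -sz.
move=> j; by rewrite !ht addnCA hr.
Qed.

Lemma necklace_pos R : necklace R -> 0 < size R.
Proof. by case/andP => /andP []. Qed.
Lemma necklace_prim R : necklace R -> primitiveb R.
Proof. by case/andP => /andP []. Qed.
Lemma necklace_canon R : necklace R -> canon R = R.
Proof. by case/andP => _ /eqP. Qed.

Lemma primitive_period R q : 0 < size R -> primitiveb R -> periodic (cword R) q -> q %% size R = 0.
Proof.
move=> p0 /(primitivebP p0) pr hq; case: (posnP (q %% size R)) => // qp.
exfalso; apply: (pr (q %% size R)); first by rewrite qp ltn_pmod.
exact: periodic_mod (cword_periodic p0) hq p0.
Qed.

Lemma primitive_phase R k k' : 0 < size R -> primitiveb R -> k < size R -> k' < size R ->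
  (forall i, cword R (k + i) = cword R (k' + i)) -> k = k'.
Proof.
move=> p0 /(primitivebP p0) pr.
wlog kk : k k' / k <= k'.
  move=> hw kp kp' hfg; case: (leqP k k') => kk; first exact: hw.
  symmetry; apply: hw => //; exact: ltnW.
move=> kp kp' hfg; case: (ltngtP k k') kk => // kk _.
exfalso; apply: (pr (k' - k)); first by clear -kk kp'; lia.
apply: (periodic_shift (k := k) p0 (cword_periodic p0)) => i.
rewrite hfg; congr cword; clear -kk; lia.
Qed.

Definition reads (W : nat -> 'I_n) R k :=
  necklace R /\ k < size R /\ forall i, W i = cword R (k + i).

Lemma reads_period W m R k : 0 < m -> periodic W m -> reads W R k -> m %% size R = 0.
Proof.
move=> m0 hW [ly [kp hk]]; have p0 := necklace_pos ly.
apply: (primitive_period p0 (necklace_prim ly)).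
apply: (periodic_shift (k:=k) p0 (cword_periodic p0)) => i; by rewrite -hk -addnA -hk hW.
Qed.

(* A sequence is read off at most one necklace and starting position: both
   necklaces have the periods of the sequence, hence the same length, so they
   are conjugate, hence equal, and then primitivity fixes the position. *)
Lemma reads_unique W R k R' k' : reads W R k -> reads W R' k' -> R = R' /\ k = k'.
Proof.
move=> [ly [kp hk]] [ly' [kp' hk']].
have p0 := necklace_pos ly; have p0' := necklace_pos ly'.
have hfg : forall i, cword R (k + i) = cword R' (k' + i) by move=> i; rewrite -hk -hk'.
have d1 := primitive_period p0 (necklace_prim ly)
  (periodic_transfer p0 (cword_periodic p0) (cword_periodic p0') hfg).
have d2 := primitive_period p0' (necklace_prim ly')
  (periodic_transfer p0' (cword_periodic p0') (cword_periodic p0) (fun i => esym (hfg i))).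
have sz : size R' = size R.
  apply/eqP; rewrite eqn_leq; apply/andP; split; apply: dvdn_leq => //; by rewrite /dvdn ?d1 ?d2.
have cl : conjb R R'.
  apply/conjbP => //; split=> //; exists (k + (size R - k')) => i.
  rewrite -(cword_periodic p0' i) sz.
  have -> : size R + i = k' + ((size R - k') + i) by rewrite -sz; lia.
  by rewrite -hfg addnA.
have eR : R = R' by rewrite -(necklace_canon ly) -(necklace_canon ly'); exact: canon_eq.
subst R'; split=> //; apply: primitive_phase (necklace_prim ly) kp kp' hfg => //.
Qed.

(* A periodic sequence reads the canonical rotation of its block of minimal
   period, from a suitable position. *)
Lemma reads_exists W m : 0 < m -> periodic W m -> exists R k, reads W R k.
Proof.
move=> m0 hW.
have [d [[d0' hd] dmin]] := least_ex (ex_intro (fun r => 0 < r /\ periodic W r) m (conj m0 hW)).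
pose P0 := mkseq W d.
have szP : size P0 = d by rewrite size_mkseq.
have p0 : 0 < size P0 by rewrite szP.
have wP : forall i, cword P0 i = W i.
  move=> i; rewrite /cword szP nth_mkseq ?ltn_pmod //; exact: (esym (periodic_modv hd d0' i)).
have prP : primitiveb P0.
  apply/primitivebP => // r /andP [r0 rd] hr.
  have : d <= r by apply: dmin; split=> // i; rewrite -!wP.
  rewrite -szP; lia.
pose R := canon P0.
have cl := canon_conj p0; rewrite -/R in cl.
have /(conjbP _ p0) [szR [s hs]] := cl.
exists R, ((d - s %% d) %% d); split; last split.
- apply/andP; split; first (apply/andP; split; [by rewrite szR|exact: primitive_conj cl prP]).
  by rewrite /R -(canon_eq p0 cl).
- by rewrite szR szP ltn_pmod.
- move=> i; rewrite hs wP (periodic_modv hd d0') [in RHS](periodic_modv hd d0'); congr W.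
  rewrite addnA -modnDml.
  have -> : (s + (d - s %% d) %% d) %% d = 0.
    rewrite modnDmr; have hlt := ltn_pmod s d0'.
    have e := divn_eq s d.
    have -> : s + (d - s %% d) = (s %/ d).+1 * d.
      rewrite mulSn; move: e hlt; set a := s %/ d * d; set b := s %% d; lia.
    by rewrite modnMl.
  by rewrite add0n.
Qed.

End Necklaces.

(* Its elements are triples [(R, (k, u))]: a
   necklace [R], a position [k] on the cycle c_|R| labelled by [R], and a reduced
   word [u] (most recent letter first) describing a path leaving that cycle.  A
   generator either moves along the cycle (when [u] is empty and the letter is
   the cycle label), or cancels the last letter of [u], or extends [u].  So the
   Cayley graph of [Neck] is a disjoint union of labelled cycles with free trees
   attached, one for each necklace; this is the universal object with respect to
   which cofibrant F_n-sets are tested. *)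

Section NecklaceSet.
Variables (n : nat) (d0 : 'I_n).
Local Notation cword := (cword d0).
Local Notation necklace := (necklace d0).

(* letters of F_n: a generator and a sign ([true] for positive) *)
Definition letter := ('I_n * bool)%type.
Definition linv (l : letter) : letter := (l.1, ~~ l.2).
Lemma linvK : involutive linv.
Proof. by case=> a b; rewrite /linv /= negbK. Qed.

Definition reducedw (u : seq letter) :=
  if u is x :: s then path (fun x y : letter => y != linv x) x s else true.

(* the first letter of the off-cycle path does not follow the cycle *)
Definition leaves_cycle R k (u : seq letter) :=
  if u is x :: s then
    (last x s != (cword R k, true)) && (last x s != (cword R (k + (size R).-1), false))
  else true.

Definition valid_state R (s : nat * seq letter) :=
  [&& s.1 < size R, reducedw s.2 & leaves_cycle R s.1 s.2].

Definition nstep (R : seq 'I_n) (l : letter) (s : nat * seq letter) : nat * seq letter :=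
  match s.2 with
  | l' :: u' => if l' == linv l then (s.1, u') else (s.1, l :: s.2)
  | [::] => if l == (cword R s.1, true) then (s.1.+1 %% size R, [::])
            else if l == (cword R (s.1 + (size R).-1), false)
                 then ((s.1 + (size R).-1) %% size R, [::])
            else (s.1, [:: l])
  end.

Lemma succ_pred_mod k p : 0 < p -> k < p -> (k.+1 %% p + p.-1) %% p = k.
Proof.
move=> p0 kp; rewrite modnDml.
have -> : k.+1 + p.-1 = k + p by lia.
by rewrite modnDr modn_small.
Qed.

Lemma pred_succ_mod k p : 0 < p -> k < p -> ((k + p.-1) %% p).+1 %% p = k.
Proof.
move=> p0 kp; rewrite -addn1 modnDml.
have -> : k + p.-1 + 1 = k + p by lia.
by rewrite modnDr modn_small.
Qed.

Lemma nstep_valid R l s : 0 < size R -> valid_state R s -> valid_state R (nstep R l s).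
Proof.
move=> p0; case: s => k [|l' u'] /and3P [kp red ok]; rewrite /= in kp red ok; rewrite /nstep /=.
- case: eqP => [El|Nl]; first by rewrite /valid_state /= ltn_pmod.
  case: eqP => [El2|Nl2]; first by rewrite /valid_state /= ltn_pmod.
  rewrite /valid_state /= kp /=; apply/andP; split; by apply/eqP.
- case: eqP => [E|N].
    rewrite /valid_state /= kp; case: u' red ok => [|x s] //= /andP [_ ->].
    exact: id.
  rewrite /valid_state /= kp red andbT ok andbT; by apply/eqP.
Qed.

Lemma nstepK R l s : 0 < size R -> valid_state R s -> nstep R (linv l) (nstep R l s) = s.
Proof.
move=> p0; case: s => k [|l' u'] /and3P [kp red ok]; rewrite /= in kp red ok; rewrite /nstep /=.
- case: eqP => [El|Nl].
    rewrite /= El /linv /=.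
    case: eqP => [Ebad|_]; first congruence.
    have -> : cword R (k.+1 %% size R + (size R).-1) = cword R k.
      apply: cword_eqmod; by rewrite succ_pred_mod // modn_small.
    by rewrite eqxx succ_pred_mod.
  case: eqP => [El2|Nl2].
    rewrite /= El2 /linv /=.
    have -> : cword R ((k + (size R).-1) %% size R) = cword R (k + (size R).-1).
      apply: cword_eqmod; by rewrite modn_mod.
    by rewrite eqxx pred_succ_mod.
  by rewrite /= linvK eqxx.
- case: eqP => [E|N] /=.
    case: u' red ok => [|x s] /=.
      move=> _ /andP [ok1 ok2]; rewrite -E.
      by rewrite (negbTE ok1) (negbTE ok2).
    move=> /andP [rx _] _; rewrite linvK.
    have -> : (x == l) = false by apply/negbTE; move: rx; rewrite E linvK.
    by rewrite E.
  by rewrite linvK eqxx.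
Qed.

Definition ncount (u : seq letter) := count (fun l : letter => ~~ l.2) u.

Lemma nstep_cases R a k u :
  (u = [::] /\ a = cword R k /\ nstep R (a, true) (k, u) = (k.+1 %% size R, [::])) \/
  (ncount (nstep R (a, true) (k, u)).2 < ncount u) \/
  (ncount (nstep R (a, true) (k, u)).2 = ncount u /\
   size (nstep R (a, true) (k, u)).2 = (size u).+1).
Proof.
rewrite /nstep /=; case: u => [|l' u'].
  case: eqP => [[->]|N]; first by left.
  case: eqP => [[]|_] //; by right; right.
case: eqP => [E|N]; first by right; left; rewrite /ncount /= E /=; lia.
by right; right.
Qed.

Lemma closed_walk_on_cycle R (s : nat -> nat * seq letter) (W : nat -> 'I_n) m :
  (forall j, s j.+1 = nstep R (W j, true) (s j)) -> s m = s 0 ->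
  forall i, i < m -> (s i).2 = [::] /\ W i = cword R (s i).1 /\
                     s i.+1 = ((s i).1.+1 %% size R, [::]).
Proof.
move=> sS sm.
pose N j := ncount (s j).2.
have Ndec : forall i, i < m -> N i.+1 <= N i.
  move=> i _; rewrite /N sS [s i]surjective_pairing.
  case: (nstep_cases R (W i) (s i).1 (s i).2) => [[-> [_ ->]] //|[h|[h _]]];
    [exact: ltnW|by rewrite h].
have Nc := nonincr_closed_const Ndec (congr1 (fun t => ncount t.2) sm).
pose Z j := size (s j).2.
have Zinc : forall i, i < m -> Z i <= Z i.+1.
  move=> i im; rewrite /Z sS [s i]surjective_pairing.
  case: (nstep_cases R (W i) (s i).1 (s i).2) => [[-> [_ ->]] //|[h|[_ ->]]] //.
  by have := Nc i im; rewrite /N sS [s i]surjective_pairing => E; rewrite E ltnn in h.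
have Zc := nondecr_closed_const Zinc (congr1 (fun t => size t.2) sm).
move=> i im; rewrite sS [s i]surjective_pairing.
case: (nstep_cases R (W i) (s i).1 (s i).2) => [[-> [-> ->]] //|[h|[_ h]]].
  by have := Nc i im; rewrite /N sS [s i]surjective_pairing => E; rewrite E ltnn in h.
by have := Zc i im; rewrite /Z sS [s i]surjective_pairing /= => E; move: h; rewrite /= E; lia.
Qed.

Definition neck_pred (t : seq 'I_n * (nat * seq letter)) := necklace t.1 && valid_state t.1 t.2.
Definition neck_car := {t : seq 'I_n * (nat * seq letter) | neck_pred t}.

Lemma neck_act_proof l (t : neck_car) : neck_pred ((sval t).1, nstep (sval t).1 l (sval t).2).
Proof.
case: t => [[R s] /andP [ly v]] /=; apply/andP; split=> //.
exact: nstep_valid (necklace_pos ly) v.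
Qed.

Definition neck_act l (t : neck_car) : neck_car :=
  exist neck_pred ((sval t).1, nstep (sval t).1 l (sval t).2) (neck_act_proof l t).

Lemma neck_actK l : cancel (neck_act l) (neck_act (linv l)).
Proof.
move=> [[R s] P]; apply: val_inj => /=; congr pair.
case/andP: P => ly v; exact: nstepK (necklace_pos ly) v.
Qed.

Lemma neck_bij a : bijective (neck_act (a, true)).
Proof.
exists (neck_act (a, false)); first exact: (neck_actK (a, true)).
move=> t; have := neck_actK (a, false) t; by rewrite /linv /=.
Qed.

Definition Neck : FnSet n :=
  {| carrier := neck_car; act := fun a => neck_act (a, true); act_bij := neck_bij |}.

Lemma neck_ainv a (t : carrier Neck) : ainv a t = neck_act (a, false) t.
Proof.
apply: (@act_inj _ Neck a); rewrite ainvK /=.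
have := neck_actK (a, false) t; by rewrite /linv /=.
Qed.

Lemma neck_root_proof R j : necklace R -> neck_pred (R, (j %% size R, [::])).
Proof. move=> ly; by rewrite /neck_pred ly /valid_state /= ltn_pmod ?(necklace_pos ly). Qed.

End NecklaceSet.

Definition Point n : FnSet n := {| carrier := unit; act := fun _ x => x;
  act_bij := fun _ => Bijective (fun x : unit => erefl x) (fun x => erefl x) |}.

(* Closed walks.  A graph morphism c_m -> C(X, A_n, F_n) is a closed walk of
   length [m] following positive generators; we index it by [nat] modulo [m]. *)

Definition omod m (m0 : 0 < m) (j : nat) : 'I_m := Ordinal (ltn_pmod j m0).

Lemma omod_val m (m0 : 0 < m) (i : 'I_m) : omod m0 i = i.
Proof. apply: val_inj => /=; exact: modn_small. Qed.
Lemma omod_S m (m0 : 0 < m) j : ordS (omod m0 j) = omod m0 j.+1.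
Proof. apply: val_inj => /=; by rewrite -addn1 modnDml addn1. Qed.
Lemma omod_add m (m0 : 0 < m) j : omod m0 (m + j) = omod m0 j.
Proof. apply: val_inj => /=; by rewrite modnDl. Qed.
Lemma omod_mod m (m0 : 0 < m) j : omod m0 (j %% m) = omod m0 j.
Proof. apply: val_inj => /=; by rewrite modn_mod. Qed.

Lemma cyc_hom_walk n (Y : FnSet n) m (m0 : 0 < m) (phn : 'I_m -> carrier Y)
    (pha : 'I_m -> carrier Y * 'I_n) :
  @is_ghom (cyc m) (Cay Y) phn pha ->
  (forall j, phn (omod m0 j.+1) = act (pha (omod m0 j)).2 (phn (omod m0 j))) /\
  (forall e, (pha e).1 = phn e).
Proof.
move=> h; split; last by move=> e; have [h1 _] := h e.
move=> j; have [h1 h2] := h (omod m0 j); rewrite /= in h1 h2.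
by rewrite -omod_S -h2 h1.
Qed.

(* [Neck -> Point] is a weak equivalence: the closed walks of [Neck] are exactly
   the walks around its cycles, so each periodic label sequence lifts to a unique
   closed walk, namely around the necklace it reads. *)

Section NecklaceWeq.
Variables (n : nat) (d0 : 'I_n).
Local Notation Neck := (Neck d0).

Lemma neck_closed_walk m (m0 : 0 < m) (phn : 'I_m -> carrier Neck) pha :
  @is_ghom (cyc m) (Cay Neck) phn pha ->
  reads d0 (fun j => (pha (omod m0 j)).2) (sval (phn (omod m0 0))).1 (sval (phn (omod m0 0))).2.1 /\
  forall j, sval (phn (omod m0 j)) = ((sval (phn (omod m0 0))).1,
     (((sval (phn (omod m0 0))).2.1 + j) %% size (sval (phn (omod m0 0))).1, [::])).
Proof.
move=> hom; have [hw _] := cyc_hom_walk m0 hom.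
set x := fun j => sval (phn (omod m0 j)).
set W := fun j => (pha (omod m0 j)).2.
have xS : forall j, x j.+1 = ((x j).1, nstep d0 (x j).1 (W j, true) (x j).2).
  by move=> j; rewrite /x hw.
set R := (x 0).1.
have xR : forall j, (x j).1 = R by elim=> // j IH; rewrite xS /= IH.
have /andP [ly v0] : neck_pred d0 (x 0) by rewrite /x; case: (phn _).
have p0 := necklace_pos ly.
set s := fun j => (x j).2.
have sS : forall j, s j.+1 = nstep d0 R (W j, true) (s j) by move=> j; rewrite /s xS /= xR.
have sm : s m = s 0 by rewrite /s /x -(omod_add m0 0) addn0.
have onc := closed_walk_on_cycle sS sm.
set k := (x 0).2.1.
have kp : k < size R by case/and3P: v0.
have sform : forall j, j <= m -> s j = ((k + j) %% size R, [::]).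
  elim=> [_|j IH jm].
    by rewrite addn0 modn_small // [s 0]surjective_pairing (proj1 (onc 0 m0)).
  have [_ [_ ->]] := onc j jm; rewrite IH ?(ltnW jm) //=.
  by rewrite -addn1 modnDml addn1 addnS.
have dv : size R %| m.
  have := sform m (leqnn m); rewrite sm (sform 0 (leq0n _)) addn0 modn_small // => [[]] E.
  have : k + m == k + 0 %[mod size R] by rewrite addn0 -E modn_small.
  by rewrite eqn_modDl mod0n /dvdn.
have sall : forall j, s j = ((k + j) %% size R, [::]).
  move=> j; rewrite /s /x -omod_mod -/(x (j %% m)) -/(s (j %% m)).
  rewrite sform ?(ltnW (ltn_pmod _ m0)) //.
  congr pair; by rewrite -modnDmr (modn_dvdm j dv) modnDmr.
split.
  split=> //; split=> // j.
  rewrite -/(W j) /W -omod_mod -/(W (j %% m)) (proj1 (proj2 (onc _ (ltn_pmod j m0)))) sall.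
  apply: cword_eqmod; rewrite modn_mod -modnDmr (modn_dvdm j dv) modnDmr //.
move=> j; rewrite -/(x j) [x j]surjective_pairing xR -/(s j) sall //.
Qed.

Lemma neck_walks_unique m (m0 : 0 < m) (phn psn : 'I_m -> carrier Neck) pha psa :
  @is_ghom (cyc m) (Cay Neck) phn pha -> @is_ghom (cyc m) (Cay Neck) psn psa ->
  (forall e, (pha e).2 = (psa e).2) ->
  (forall v, phn v = psn v) /\ (forall e, pha e = psa e).
Proof.
move=> hp hs lab.
have [f1 e1] := neck_closed_walk m0 hp; have [f2 e2] := neck_closed_walk m0 hs.
have eW : (fun j => (psa (omod m0 j)).2) = (fun j => (pha (omod m0 j)).2).
  by apply: functional_extensionality => j; rewrite lab.
rewrite eW in f2; have [eR ek] := reads_unique f1 f2.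
have eq : forall v, phn v = psn v.
  move=> v; rewrite -(omod_val m0 v); apply: val_inj.
  change (sval (phn (omod m0 v)) = sval (psn (omod m0 v))); by rewrite e1 e2 eR ek.
split=> // e; have [_ h1] := cyc_hom_walk m0 hp; have [_ h2] := cyc_hom_walk m0 hs.
by rewrite [pha e]surjective_pairing [psa e]surjective_pairing h1 h2 lab eq.
Qed.

Lemma neck_walks_exist m (m0 : 0 < m) (W : 'I_m -> 'I_n) :
  exists (phn : 'I_m -> carrier Neck) (pha : 'I_m -> carrier Neck * 'I_n),
    @is_ghom (cyc m) (Cay Neck) phn pha /\ forall e, (pha e).2 = W e.
Proof.
have Wper : periodic (fun j => W (omod m0 j)) m by move=> j; rewrite omod_add.
have [R [k fx]] := reads_exists d0 m0 Wper.
have dv : size R %| m by rewrite /dvdn (reads_period m0 Wper fx).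
case: fx => [ly [kp hk]].
pose phn (i : 'I_m) : carrier Neck :=
  exist (neck_pred d0) (R, ((k + i) %% size R, [::])) (neck_root_proof (k + i) ly).
exists phn, (fun i => (phn i, W i)); split=> // e; split=> //=; apply: val_inj => /=.
have -> : W e = cword d0 R ((k + e) %% size R).
  have := hk e; rewrite omod_val => ->; apply: cword_eqmod; by rewrite modn_mod.
rewrite /nstep /= eqxx -addn1 modnDml addn1 -addnS.
by rewrite -[in RHS]modnDmr (modn_dvdm _ dv) modnDmr.
Qed.

Lemma neck_weq : @weq n Neck (Point n) (fun _ => tt).
Proof.
move=> m m0; split.
- move=> phn psn pha psa hp hs _ hE.
  apply: (neck_walks_unique m0 hp hs) => e; exact: (congr1 snd (hE e)).
- move=> chn cha hc; have [phn [pha [hom lab]]] := neck_walks_exist m0 (fun e => (cha e).2).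
  exists phn, pha; split=> //; split; first by move=> v; case: (chn v).
  move=> e; rewrite /Cay_arc lab; by case: (cha e) => [[] a].
Qed.

End NecklaceWeq.

Lemma links_cay n (X : FnSet n) (e : arc (Cay X)) y z : links e y z ->
  (y = e.1 /\ z = act e.2 e.1) \/ (z = e.1 /\ y = act e.2 e.1).
Proof. by rewrite /links /=; case=> [[-> ->]|[-> ->]]; auto. Qed.

Lemma conn_inv n (X : FnSet n) (S : arc (Cay X) -> Prop) (P Q : carrier X -> Prop) :
  (forall y a, P y -> S (y, a) -> P (act a y)) -> (forall y a, P (act a y) -> S (y, a) -> P y) ->
  (forall y a, P y -> P (act a y) -> S (y, a) -> (Q y <-> Q (act a y))) ->
  forall x z, connected S x z -> P x -> (P z /\ (Q x <-> Q z)).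
Proof.
move=> h1 h2 h3 x z; elim=> [x'|x' y' z' e Se l _ IH] Px; first by split.
have [Py Qxy] : P y' /\ (Q x' <-> Q y').
  rewrite [e]surjective_pairing in Se.
  case: (links_cay l) => [[ex ey]|[ex ey]]; subst x' y'.
    split; [exact: h1|]; apply: h3 => //; exact: h1.
  have Pz := h2 _ _ Px Se; split=> //; symmetry; exact: h3.
have [Pz Qyz] := IH Py; split=> //; by rewrite Qxy.
Qed.

Section Component.
Variables (n : nat) (X : FnSet n).

Definition comp (x0 y : carrier X) := connected (fun _ : arc (Cay X) => True) x0 y.

Lemma comp_links x0 (e : arc (Cay X)) (y z : carrier X) : links e y z -> comp x0 y -> comp x0 z.
Proof. move=> l h; apply: (conn_trans h); exact: (@conn1 (Cay X) _ e). Qed.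

Lemma comp_act x0 a y : comp x0 y -> comp x0 (act a y).
Proof. apply: (@comp_links x0 (y, a)); by left. Qed.

Lemma comp_act_inv x0 a y : comp x0 (act a y) -> comp x0 y.
Proof. apply: (@comp_links x0 (y, a)); by right. Qed.

Lemma comp_eq a y : comp (act a y) = comp y.
Proof.
apply: functional_extensionality => z; apply: propositional_extensionality.
split; apply: conn_trans; apply: (@conn1 (Cay X) _ (y, a)) => //; by [left|right].
Qed.

End Component.

Lemma cofibrant_lift n (X : FnSet n) : cofibrant X ->
  forall (A B : FnSet n) (q : carrier A -> carrier B), equivariant q -> weq q ->
  forall v : carrier X -> carrier B, equivariant v ->
  exists h : carrier X -> carrier A, equivariant h /\ forall y, q (h y) = v y.
Proof.
move=> cof A B q qe qw v ve.
have [h [he [_ hq]]] := cof A B q qe qw (fun e : Empty_set => match e with end) v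
  (fun a e => match e with end) ve (fun e => match e with end).
by exists h.
Qed.

(* If no closed walk meets the component [comp x0], the complement of that
   component includes into [X] by a weak equivalence, and a lift of [id_X]
   along it would send [x0] outside its own component. *)

Section Complement.
Variables (n : nat) (X : FnSet n) (x0 : carrier X).
Local Notation K := (comp x0).

Definition compl_car := {y : carrier X | ~ K y}.
Definition compl_act a (y : compl_car) : compl_car :=
  exist (fun z => ~ K z) (act a (sval y))
    (fun h => proj2_sig y (@comp_act_inv _ _ x0 a (sval y) h)).
Lemma compl_inv_proof a (y : compl_car) : ~ K (ainv a (sval y)).
Proof. move=> h; apply: (proj2_sig y); rewrite -(ainvK a (sval y)); exact: comp_act. Qed.
Definition compl_inv a (y : compl_car) : compl_car :=
  exist (fun z => ~ K z) (ainv a (sval y)) (@compl_inv_proof a y).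
Lemma compl_bij a : bijective (compl_act a).
Proof. exists (compl_inv a) => y; apply: sig_eq => /=; by rewrite ?actK ?ainvK. Qed.

Definition Compl : FnSet n := {| carrier := compl_car; act := compl_act; act_bij := compl_bij |}.

(* When no closed walk meets [K], every closed walk of [X] lies in the
   complement, so the inclusion is a weak equivalence. *)
Lemma compl_weq : (forall m (m0 : 0 < m) (phn : 'I_m -> carrier X) pha,
   @is_ghom (cyc m) (Cay X) phn pha -> forall i, ~ K (phn i)) ->
  @weq n Compl X (fun y => sval y).
Proof.
move=> noc m m0; split.
- move=> phn psn pha psa _ _ hv he.
  have e1 : forall v, phn v = psn v by move=> v; apply: sig_eq; exact: hv.
  split=> // e; have := he e; rewrite /Cay_arc /= => [[h1 h2]].
  by rewrite [pha e]surjective_pairing [psa e]surjective_pairing h2 (sig_eq h1).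
- move=> chn cha hc.
  pose lift i : carrier Compl := exist (fun z => ~ K z) (chn i) (noc m m0 chn cha hc i).
  exists lift, (fun i => (lift i, (cha i).2)); split; last split => //.
    move=> e; split=> //=; apply: sig_eq => /=.
    have [h1 h2] := hc e; rewrite /= in h1 h2; by rewrite -h2 h1.
  move=> e; rewrite /Cay_arc /=; have [h1 _] := hc e; rewrite /= in h1.
  by rewrite -h1 -surjective_pairing.
Qed.

Lemma cofibrant_comp_cycle : cofibrant X -> exists m (m0 : 0 < m) (phn : 'I_m -> carrier X) pha,
  @is_ghom (cyc m) (Cay X) phn pha /\ exists i, K (phn i).
Proof.
move=> cof; apply: NNPP => hno.
have noc : forall m (m0 : 0 < m) (phn : 'I_m -> carrier X) pha,
   @is_ghom (cyc m) (Cay X) phn pha -> forall i, ~ K (phn i).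
  move=> m m0 phn pha h i Ki; apply: hno; exists m, m0, phn, pha; split=> //; by exists i.
have qe : equivariant (fun y : carrier Compl => sval y) by [].
have [h [_ hq]] := cofibrant_lift cof qe (compl_weq noc) (v := id) (fun a x => erefl).
have := proj2_sig (h x0); rewrite hq; apply; exact: conn_refl.
Qed.

End Complement.

(* Fix an equivariant [g : X -> Neck] (given by
   cofibrancy, since [Neck -> Point] is a weak equivalence) and a point [x1] of
   the component [K] of [x0] that [g] sends onto the cycle of a necklace [R].
   Walking from [x1] along the labels of [R] returns to [x1]; the first return
   time [period] gives an embedded cycle c_period.  The length of the off-cycle
   word of [g y] is a height on [K]: every arc of [K] off the embedded cycle goes
   from a point to its parent one level down, so these arcs form a forest whose
   trees are rooted at the cycle. *)

Fixpoint walk n (X : FnSet n) (d0 : 'I_n) (R : seq 'I_n) (k : nat) (x1 : carrier X) t :=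
  if t is t'.+1 then act (cword d0 R (k + t')) (walk d0 R k x1 t') else x1.

Section CofibrantToRn.
Variables (n : nat) (X : FnSet n) (d0 : 'I_n).
Local Notation Neck := (Neck d0).
Local Notation cword := (cword d0).
Variable g : carrier X -> carrier Neck.
Hypothesis geq : equivariant g.
Variable x0 : carrier X.
Local Notation K := (comp x0).
Variables (R : seq 'I_n) (k : nat) (x1 : carrier X).
Hypotheses (kp : k < size R) (Kx1 : K x1)
  (gx1 : sval (g x1) = (R, (k, [::]))).
Local Notation xw := (walk d0 R k x1).
Variable m : nat.
Hypotheses (m0 : 0 < m) (xm : xw m = x1).

Lemma gact a y :
  sval (g (act a y)) = ((sval (g y)).1, nstep d0 (sval (g y)).1 (a, true) (sval (g y)).2).
Proof. by rewrite geq. Qed.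

Lemma gainv a y :
  sval (g (ainv a y)) = ((sval (g y)).1, nstep d0 (sval (g y)).1 (a, false) (sval (g y)).2).
Proof. by rewrite (equiv_ainv geq) neck_ainv. Qed.

Lemma g_walk t : sval (g (xw t)) = (R, ((k + t) %% size R, [::])).
Proof.
elim: t => [|t IH]; first by rewrite /= gx1 addn0 modn_small.
rewrite /= gact IH /= /nstep /=.
have -> : cword R ((k + t) %% size R) = cword R (k + t) by apply: cword_eqmod; rewrite modn_mod.
rewrite eqxx; congr pair; congr pair.
by rewrite -addn1 modnDml addn1 addnS.
Qed.

Definition period := minnat (fun t => 0 < t /\ xw t = x1).

Lemma period_spec : (0 < period /\ xw period = x1) /\
  forall t, 0 < t /\ xw t = x1 -> period <= t.
Proof. apply: minnat_spec; by exists m. Qed.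

Lemma period_gt0 : 0 < period. Proof. by case: period_spec => [[]]. Qed.
Lemma walk_period : xw period = x1. Proof. by case: period_spec => [[]]. Qed.

(* [g] sees the walk return to [x1] after [period] steps, so [|R|] divides
   [period], and [period] is a period of the walk. *)
Lemma period_dvd : period %% size R = 0.
Proof.
have := g_walk period; rewrite walk_period gx1 => [[E]].
have : k + period == k + 0 %[mod size R] by rewrite addn0 -E modn_small.
by rewrite eqn_modDl mod0n => /eqP.
Qed.

Lemma walk_periodic : periodic xw period.
Proof.
elim=> [|t IH]; first by rewrite addn0 walk_period.
rewrite addnS /= IH; congr act; apply: cword_eqmod.
by rewrite addnCA -modnDml period_dvd add0n.
Qed.

Lemma walk_mod t : xw t = xw (t %% period).
Proof. exact: (periodic_modv walk_periodic period_gt0). Qed.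

(* the walk can be cancelled from the left, since [g] remembers positions *)
Lemma walk_cancel s r : xw (s + r) = xw s -> xw r = x1.
Proof.
elim: s => [|s IH]; first by rewrite add0n.
move=> H; apply: IH.
have E : (k + (s + r).+1) %% size R = (k + s.+1) %% size R.
  by have := congr1 (fun z => (sval (g z)).2.1) H; rewrite addSn !g_walk.
have E' : cword R (k + (s + r)) = cword R (k + s).
  apply: cword_eqmod; rewrite !addnS -[(k + (s + r)).+1]addn1 -[(k + s).+1]addn1 in E.
  apply/eqP; rewrite -(eqn_modDr 1); exact/eqP.
move: H; rewrite addSn /= E'; exact: act_inj.
Qed.

Lemma walk_inj s t : s < period -> t < period -> xw s = xw t -> s = t.
Proof.
wlog st : s t / s <= t.
  move=> hw sT tT e; case: (leqP s t) => h; first exact: hw.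
  symmetry; apply: hw => //; exact: ltnW.
move=> sT tT e; case: (ltngtP s t) st => // lt _.
have := @walk_cancel s (t - s); rewrite subnKC ?(ltnW lt) // -e => /(_ erefl) h.
have [_ hmin] := period_spec; have := hmin (t - s); rewrite subn_gt0 lt => /(_ (conj erefl h)).
lia.
Qed.

Definition cyc_node (t : 'I_period) : carrier X := xw t.
Definition cyc_arc (t : 'I_period) : carrier X * 'I_n := (xw t, cword R (k + t)).

Lemma cyc_hom : @is_ghom (cyc period) (Cay X) cyc_node cyc_arc.
Proof. move=> e; split=> //=; by rewrite /cyc_node -(walk_mod e.+1). Qed.

Lemma cyc_node_inj : injective cyc_node.
Proof. move=> s t e; apply: val_inj; exact: walk_inj (ltn_ord s) (ltn_ord t) e. Qed.

Lemma cyc_arc_inj : injective cyc_arc.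
Proof. move=> s t e; apply: cyc_node_inj; exact: (congr1 fst e). Qed.

Lemma comp_walk t : K (xw t).
Proof. elim: t => // t IH; exact: comp_act. Qed.

(* height (length of the off-cycle word), parent and arc to the parent *)
Definition ht y := size (sval (g y)).2.2.
Definition par y := match (sval (g y)).2.2 with
  | (a, true) :: _ => ainv a y | (a, false) :: _ => act a y | [::] => y end.
Definition parc y : carrier X * 'I_n := match (sval (g y)).2.2 with
  | (a, true) :: _ => (ainv a y, a) | (a, false) :: _ => (y, a) | [::] => (y, d0) end.

Lemma ht_walk t : ht (xw t) = 0.
Proof. by rewrite /ht g_walk. Qed.

Lemma par_spec y : 0 < ht y -> ht (par y) = (ht y).-1 /\ @links (Cay X) (parc y) y (par y).
Proof.
rewrite /ht /par /parc; case E: (sval (g y)).2.2 => [|[a b] u] //= _.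
case: b E => E.
  rewrite gainv /nstep /= E /= /linv /= eqxx /=; split=> //; right; by rewrite /= ainvK.
rewrite gact /nstep /= E /= /linv /= eqxx /=; split=> //; by left.
Qed.

Lemma arc_cases y a :
  ((sval (g y)).2.2 = [::] /\ a = cword (sval (g y)).1 (sval (g y)).2.1) \/
  (ht (act a y) = (ht y).+1 /\ par (act a y) = y /\ parc (act a y) = (y, a)) \/
  (ht y = (ht (act a y)).+1 /\ par y = act a y /\ parc y = (y, a)).
Proof.
rewrite /ht /par /parc gact; case E: (sval (g y)).2.2 => [|[b c] u].
- rewrite /nstep /= E /=; case: eqP => [[->]|N]; first by left.
  case: eqP => [Eb|_]; first congruence.
  by right; left; rewrite /= actK.
- rewrite /nstep /= E /=; case: eqP => [El|Nl].
    case: El => -> ->; by right; right.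
  by right; left; rewrite /= actK.
Qed.

Lemma comp_necklace y : K y -> (sval (g y)).1 = R.
Proof.
have inv : forall x z, connected (fun _ : arc (Cay X) => True) x z ->
    (fun _ => True) x -> (True /\ ((sval (g x)).1 = R <-> (sval (g z)).1 = R)).
  apply: conn_inv => // y' a _ _ _; by rewrite gact.
move=> Ky; have [_ h1] := inv _ _ Ky I; have [_ h2] := inv _ _ Kx1 I.
by apply/h1/h2; rewrite gx1.
Qed.

Definition root y := iter (ht y) par y.

Lemma root_par y : 0 < ht y -> root (par y) = root y.
Proof.
move=> h; rewrite /root (proj1 (par_spec h)).
by case: (ht y) h => // t _; rewrite iterSr.
Qed.

Lemma root_ht0 y : ht y = 0 -> root y = y.
Proof. by rewrite /root => ->. Qed.

(* Every point of [K] has its root on the embedded cycle: this property is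
   invariant along arcs, and holds at [x1]. *)
Definition root_on_cycle y := exists t, root y = xw t.

Lemma root_on_cycle_step y a : K y -> (root_on_cycle y <-> root_on_cycle (act a y)).
Proof.
move=> Ky; case: (arc_cases y a) => [[E ea]|[[h1 [h2 _]]|[h1 [h2 _]]]].
- have hy : ht y = 0 by rewrite /ht E.
  have gay : sval (g (act a y)) = (R, ((sval (g y)).2.1.+1 %% size R, [::])).
    rewrite gact [(sval (g y)).2]surjective_pairing E comp_necklace // /nstep /=.
    by rewrite -(comp_necklace Ky) -ea eqxx (comp_necklace Ky).
  have hay : ht (act a y) = 0 by rewrite /ht gay.
  rewrite /root_on_cycle root_ht0 // root_ht0 //; split=> [[t yt]|[t yt]].
    exists t.+1 => /=; rewrite -yt; congr act.
    have := g_walk t; rewrite -yt => gy; rewrite ea gy /=.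
    apply: cword_eqmod; by rewrite modn_mod.
  have tp : 0 < t + period by rewrite addn_gt0 period_gt0 orbT.
  exists (t + period).-1; apply: (@act_inj _ _ a); rewrite yt.
  have e1 : xw t = xw (t + period).-1.+1 by rewrite prednK // addnC walk_periodic.
  rewrite e1 /=; congr act.
  rewrite ea (comp_necklace Ky); apply: cword_eqmod.
  have := g_walk t; rewrite -yt gay => [[E2]].
  apply/eqP; rewrite -(eqn_modDr 1) !addn1 -addnS prednK //.
  by rewrite E2 addnA -modnDmr period_dvd addn0.
- have hp : 0 < ht (act a y) by rewrite h1.
  by rewrite /root_on_cycle -(root_par hp) h2.
- have hp : 0 < ht y by rewrite h1.
  by rewrite /root_on_cycle -(root_par hp) h2.
Qed.

Lemma root_on_cycle_comp y : K y -> root_on_cycle y.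
Proof.
have inv := @conn_inv n X (fun _ => True) K root_on_cycle (fun y a Ky _ => comp_act a Ky)
  (fun y a Ky _ => comp_act_inv Ky) (fun y a Ky _ _ => root_on_cycle_step a Ky).
move=> Ky; have [_ h1] := inv _ _ Ky (conn_refl _ _).
have [_ h2] := inv _ _ Kx1 (conn_refl _ _).
apply/h1/h2; exists 0; rewrite root_ht0 //; by rewrite /ht gx1.
Qed.

Definition off_cycle (e : arc (Cay X)) := K (src e) /\ ~ (exists t : 'I_period, cyc_arc t = e).

(* An off-cycle arc is not an arc along the cycle of [Neck]: otherwise its
   source, a height-0 point of [K], would lie on the walk and the arc on c_period. *)
Lemma off_cycle_not_along y a : off_cycle (y, a) ->
  ~ ((sval (g y)).2.2 = [::] /\ a = cword (sval (g y)).1 (sval (g y)).2.1).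
Proof.
move=> [Ky hn] [E ea]; apply: hn.
have [t yt] := root_on_cycle_comp Ky; rewrite root_ht0 ?/ht ?E // in yt.
exists (omod period_gt0 t); rewrite /cyc_arc /= -walk_mod -yt ea; congr pair.
have := g_walk t; rewrite -yt => ->; apply: cword_eqmod; rewrite /=.
have dv : size R %| period by rewrite /dvdn period_dvd.
by rewrite modn_mod -modnDmr (modn_dvdm _ dv) modnDmr.
Qed.

Lemma off_cycle_parent (e : arc (Cay X)) v v' : off_cycle e -> links e v v' ->
  (ht v' = (ht v).+1 /\ parc v' = e /\ par v' = v) \/
  (ht v = (ht v').+1 /\ parc v = e /\ par v = v').
Proof.
case: e => y a Se l; have hn := off_cycle_not_along Se.
case: (links_cay l) => /= [[-> ->]|[-> ->]];
  case: (arc_cases y a) => [//|[[h1 [h2 h3]]|[h1 [h2 h3]]]]; by [left|right].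
Qed.

(* On a cycle of off-cycle arcs, the vertex of maximal height would have two
   parent arcs. *)
Lemma off_cycle_acyclic : ~ has_cycle off_cycle.
Proof.
move=> [M [v [e [M0 [vM [hE hd]]]]]].
have [i0 [i0M hmax]] := argmax_nat (fun i => ht (v i)) M0.
have hle : forall i, i <= M -> ht (v i) <= ht (v i0).
  move=> i; rewrite leq_eqVlt => /orP [/eqP ->|iM]; last exact: hmax.
  by rewrite vM; apply: hmax.
have [Se1 l1] := hE i0 i0M.
have [par1 h1] : parc (v i0) = e i0 /\ ht (v i0) = (ht (v i0.+1)).+1.
  case: (off_cycle_parent Se1 l1) => [[h _]|[h [-> _]]] //.
  by have := hle i0.+1 i0M; rewrite h ltnn.
have M2 : 1 < M.
  case: (ltngtP M 1) => // M1; first lia.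
  subst M; have i00 : i0 = 0 by lia.
  subst i0; move: h1; rewrite vM; lia.
have [j [jM [vj ij]]] : exists j, j < M /\ v j.+1 = v i0 /\ i0 <> j.
  case: i0 i0M {hmax hle Se1 l1 par1 h1} => [|i] iM.
    exists M.-1; split; first lia; split; last lia.
    by rewrite prednK ?vM //; lia.
  exists i; split; first lia; split=> //; lia.
have [Se2 l2] := hE j jM; rewrite vj in l2.
have par2 : parc (v i0) = e j.
  case: (off_cycle_parent Se2 l2) => [[_ [-> _]]|[h _]] //.
  by have := hle j (ltnW jM); rewrite h ltnn.
case: (ltngtP i0 j) => [lt|lt|eq] //.
- by have [hne _] := hd _ _ lt jM; apply: hne; rewrite -par1 par2.
- by have [hne _] := hd _ _ lt i0M; apply: hne; rewrite -par2 par1.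
Qed.

(* The arc to the parent is an off-cycle arc: it has an end of positive height. *)
Lemma parc_off_cycle y : K y -> 0 < ht y -> off_cycle (parc y).
Proof.
move=> Ky hy; have [_ l] := par_spec hy; split.
  have Kp : K (par y) := comp_links l Ky.
  by case: (l) => [[-> _]|[-> _]].
move=> [t et]; have [ha hb] := cyc_hom t.
move: l; rewrite -et /links ha hb => l.
have : ht y = 0 by case: l => [[<- _]|[_ <-]]; exact: ht_walk.
lia.
Qed.

(* Every point is connected to its root by off-cycle arcs, and off-cycle arcs
   preserve the root; so each point reaches exactly one node of the cycle. *)
Lemma conn_root y : K y -> connected off_cycle y (root y).
Proof.
move: {2}(ht y) (erefl (ht y)) => h; elim: h y => [|h IH] y hy Ky.
  rewrite root_ht0 //; exact: conn_refl.
have hp : 0 < ht y by rewrite hy.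
have [hpar l] := par_spec hp.
apply: (conn_step (parc_off_cycle Ky hp) l); rewrite -(root_par hp); apply: IH.
  by rewrite hpar hy.
exact: comp_links l Ky.
Qed.

Lemma conn_root_eq y z : connected off_cycle y z -> root y = root z.
Proof.
elim=> // x y' z' e Se l _ IH; rewrite -IH.
case: (off_cycle_parent Se l) => [[h1 [_ h3]]|[h1 [_ h3]]].
  have hp : 0 < ht y' by rewrite h1.
  by rewrite -(root_par hp) h3.
have hp : 0 < ht x by rewrite h1.
by rewrite -(root_par hp) h3.
Qed.

Lemma comp_cycle_forest :
  exists (p : nat) (phn : node (cyc p) -> node (Cay X)) (pha : arc (cyc p) -> arc (Cay X)),
      0 < p /\ is_ghom phn pha /\ injective phn /\ injective pha /\
      (forall k, K (phn k)) /\
      let S := fun e : arc (Cay X) => K (src e) /\ ~ (exists k, pha k = e) in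
      ~ @has_cycle (Cay X) S /\
      (forall y, K y -> exists k, @connected (Cay X) S y (phn k) /\
                          forall k', @connected (Cay X) S y (phn k') -> phn k' = phn k).
Proof.
exists period, cyc_node, cyc_arc; do 5 (split; first by [exact: period_gt0|exact: cyc_hom
  |exact: cyc_node_inj|exact: cyc_arc_inj|move=> t; exact: comp_walk]).
split; first exact: off_cycle_acyclic.
move=> y Ky; have [t yt] := root_on_cycle_comp Ky.
exists (omod period_gt0 t); split.
  by rewrite /cyc_node /= -walk_mod -yt; exact: conn_root.
move=> t' c; have := conn_root_eq c; rewrite [root (cyc_node t')]root_ht0; last exact: ht_walk.
by rewrite yt /cyc_node /= -walk_mod => ->.
Qed.

End CofibrantToRn.

Lemma closed_walk_root n (X : FnSet n) (d0 : 'I_n) (g : carrier X -> carrier (Neck d0))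
    (x0 : carrier X) m (m0 : 0 < m) (phn : 'I_m -> carrier X) pha :
  equivariant g -> @is_ghom (cyc m) (Cay X) phn pha -> (exists i, comp x0 (phn i)) ->
  exists R k x1, [/\ k < size R, comp x0 x1, sval (g x1) = (R, (k, [::])) &
                     walk d0 R k x1 m = x1].
Proof.
move=> geq hom [i0 Ki0].
have homg : @is_ghom (cyc m) (Cay (Neck d0)) (fun i => g (phn i)) (fun i => Cay_arc g (pha i)).
  move=> e; have [h1 h2] := hom e; rewrite /= in h1 h2.
  by rewrite /Cay_arc; split=> /=; [rewrite h1|rewrite -h2 (geq (pha e).2)].
have [[_ [kp hk]] form] := neck_closed_walk m0 homg.
have [hw _] := cyc_hom_walk m0 hom.
set x1 := phn (omod m0 0).
exists (sval (g x1)).1, (sval (g x1)).2.1, x1; split=> //.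
- have Kall : forall t, comp x0 (phn (omod m0 (i0 + t))).
    elim=> [|t IH]; first by rewrite addn0 omod_val.
    rewrite addnS hw; exact: comp_act.
  have := Kall (m - i0); rewrite subnKC ?(ltnW (ltn_ord i0)) //.
  by rewrite /x1 -(omod_add m0 0) addn0.
- by rewrite form addn0 modn_small.
- have xweq : forall t, walk d0 (sval (g x1)).1 (sval (g x1)).2.1 x1 t = phn (omod m0 t).
    elim=> // t IH; rewrite /= IH hw; congr act; exact: (esym (hk t)).
  by rewrite xweq /x1 -(omod_add m0 0) addn0.
Qed.

Lemma cofibrant_in_Rn n (X : FnSet n) : cofibrant X -> in_Rn X.
Proof.
move=> cof x0.
have [m [m0 [phn [pha [hom Kcyc]]]]] := cofibrant_comp_cycle x0 cof.
pose d0 := (pha (omod m0 0)).2.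
have [g [geq _]] := cofibrant_lift cof (q := fun _ : carrier (Neck d0) => tt : carrier (Point n))
  (fun _ _ => erefl) (neck_weq d0) (v := fun _ => tt) (fun _ _ => erefl).
have [R [k [x1 [kp Kx1 gx1 xm]]]] := closed_walk_root m0 geq hom Kcyc.
exact (comp_cycle_forest geq kp Kx1 gx1 m0 xm).
Qed.

Definition is_walk (G : Gph) (S : arc G -> Prop) L (P : nat -> node G) (E : nat -> arc G) :=
  forall i, i < L -> S (E i) /\ links (E i) (P i) (P i.+1).

Definition catv (T : Type) M (P C : nat -> T) i := if i <= M then P i else C (i - M).
Definition cate (T : Type) M (E F : nat -> T) i := if i < M then E i else F (i - M).

Lemma is_walk_cat (G : Gph) (S : arc G -> Prop) M L P C E F :
  is_walk S M P E -> is_walk S L C F -> C 0 = P M ->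
  is_walk S (M + L) (catv M P C) (cate M E F).
Proof.
move=> hP hC e i iML; rewrite /catv /cate.
case: (ltnP i M) => iM; first by rewrite (ltnW iM); exact: hP.
case: (leqP i M) => iM'.
  have ei : i = M by lia.
  subst i; rewrite subnn subSnn -e; apply: hC; lia.
rewrite subSn ?(ltnW iM') //; apply: hC; lia.
Qed.

Lemma is_walk_rev (G : Gph) (S : arc G -> Prop) L P E :
  is_walk S L P E -> is_walk S L (fun i => P (L - i)) (fun i => E (L - i.+1)).
Proof.
move=> h i iL; have [Se l] := h (L - i.+1) ltac:(lia); split=> //.
have e : (L - i.+1).+1 = L - i by lia.
by rewrite e in l; apply: links_sym.
Qed.

Lemma glue_cycle (G : Gph) (S : arc G -> Prop) M L (P C : nat -> node G) (E F : nat -> arc G) :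
  0 < L -> 2 < M + L -> is_walk S M P E -> is_walk S L C F -> C 0 = P M -> C L = P 0 ->
  (forall i i', i < i' -> i' <= M -> P i <> P i') ->
  (forall i i', 0 < i -> i < i' -> i' < L -> C i <> C i') ->
  (forall i i', i <= M -> 0 < i' -> i' < L -> P i <> C i') -> has_cycle S.
Proof.
move=> L0 ML wP wC e0 eL dP dC dPC.
apply: (@mk_cycle G S (M + L) (catv M P C) (cate M E F)); first lia.
- rewrite /catv leq0n ifN ?addKn ?eL //; lia.
- exact: is_walk_cat.
- move=> i j ij jML; rewrite /catv; case: (leqP j M) => jM.
    rewrite (ltnW (leq_trans ij jM)); exact: dP.
  case: (leqP i M) => iM; first by apply: dPC; lia.
  apply: dC; lia.
- lia.
Qed.

(* Fix a component [K] given as an embedded cycle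
   [phn, pha] plus a forest of tree arcs [tree_arc] in which every point is
   connected to exactly one cycle node.  The distance [dist y] to the cycle along
   tree arcs decreases by one along a chosen parent arc.  Acyclicity forces
   adjacent points to have different distances ([dist_adjacent_neq]) and the
   parent arc to be the only arc towards the cycle ([parent_arc_unique]): two
   descents from distinct points meet, and the resulting "V" closes up into a
   cycle of tree arcs.  A lift is then chosen on the cycle (the surjectivity
   part of the weak equivalence) and propagated outwards along parent arcs. *)

Section RnToLift.
Variables (n : nat) (X : FnSet n) (x0 : carrier X).
Local Notation K := (comp x0).
Variables (p : nat) (phn : 'I_p -> carrier X) (pha : 'I_p -> carrier X * 'I_n).
Definition tree_arc (e : arc (Cay X)) := K (src e) /\ ~ (exists k, pha k = e).
Hypotheses (H0 : 0 < p) (Hhom : @is_ghom (cyc p) (Cay X) phn pha) (Hinj : injective phn)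
  (HK : forall k, K (phn k)) (Hnoc : ~ has_cycle tree_arc)
  (Hroot : forall y, K y -> exists k, connected tree_arc y (phn k) /\
              forall k', connected tree_arc y (phn k') -> phn k' = phn k).

Lemma tree_arc_comp (e : arc (Cay X)) y z : tree_arc e -> links e y z -> K y /\ K z.
Proof.
move=> [Ks _] l; have Kt : K (tgt e) by apply: comp_act.
by case: l => [[<- <-]|[<- <-]].
Qed.

Inductive reach : carrier X -> nat -> Prop :=
| reach0 k : reach (phn k) 0
| reachS y z (e : arc (Cay X)) t : tree_arc e -> links e y z -> reach z t -> reach y t.+1.

Lemma reach_ex y : K y -> exists t, reach y t.
Proof.
move=> Ky; have [k [c _]] := Hroot Ky.
have : exists t, reach (phn k) t by exists 0; exact: reach0.
elim: c => // x y' z e Se l _ IH /IH [t r]; exists t.+1; exact: reachS Se l r.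
Qed.

Definition dist y := minnat (reach y).

Lemma dist_spec y : K y -> reach y (dist y) /\ forall t, reach y t -> dist y <= t.
Proof. move=> Ky; exact: minnat_spec (reach_ex Ky). Qed.

Lemma dist_cyc k : dist (phn k) = 0.
Proof. have [_ h] := dist_spec (HK k); have := h 0 (reach0 k); lia. Qed.

Lemma dist0_cyc y : K y -> dist y = 0 -> exists k, y = phn k.
Proof.
move=> Ky e; have [r _] := dist_spec Ky; rewrite e in r.
inversion r; by exists k.
Qed.

Lemma dist_lip (e : arc (Cay X)) y z : tree_arc e -> links e y z -> dist y <= (dist z).+1.
Proof.
move=> Se l; have [Ky Kz] := tree_arc_comp Se l.
have [rz _] := dist_spec Kz; have [_ h] := dist_spec Ky; exact: h _ (reachS Se l rz).
Qed.

Lemma dist_step y t : K y -> dist y = t.+1 ->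
  exists (e : arc (Cay X)) z, tree_arc e /\ links e y z /\ dist z = t.
Proof.
move=> Ky e; have [r _] := dist_spec Ky; rewrite e in r.
inversion r as [|y' z e0 t' S1 l1 r1 E1 E2]; subst.
exists e0, z; split=> //; split=> //.
have [_ Kz] := tree_arc_comp S1 l1.
have [_ h] := dist_spec Kz; have := h _ r1; have := dist_lip S1 l1; lia.
Qed.

Definition arcof y (l : 'I_n * bool) : carrier X * 'I_n :=
  if l.2 then (ainv l.1 y, l.1) else (y, l.1).
Definition endof y (l : 'I_n * bool) : carrier X := if l.2 then ainv l.1 y else act l.1 y.

Lemma links_arcof y l : @links (Cay X) (arcof y l) y (endof y l).
Proof. rewrite /links /arcof /endof; case: l => a [] /=; [right|left] => //; by rewrite ainvK. Qed.

Definition lab y := pickopt (fun l => tree_arc (arcof y l) /\ dist (endof y l) = (dist y).-1).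

Lemma lab_spec y : K y -> 0 < dist y ->
  exists l, lab y = Some l /\ tree_arc (arcof y l) /\ dist (endof y l) = (dist y).-1.
Proof.
move=> Ky dp; rewrite /lab; apply: pickoptP.
have [e [z [Se [l dz]]]] := dist_step Ky (esym (prednK dp)).
case: e Se l => w a Se l; case: (links_cay l) => /= [[ey ez]|[ez ey]]; subst.
  exists (a, false); by rewrite /arcof /endof /=.
exists (a, true); by rewrite /arcof /endof /= actK.
Qed.

Lemma lab_some y l : lab y = Some l -> tree_arc (arcof y l) /\ dist (endof y l) = (dist y).-1.
Proof. exact: pickoptS. Qed.

Definition tpar y := if lab y is Some l then endof y l else y.
Definition tparc y : arc (Cay X) := if lab y is Some l then arcof y l else pha (Ordinal H0).
Definition desc i y := iter i tpar y.

Lemma tpar_spec y : K y -> 0 < dist y ->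
  tree_arc (tparc y) /\ links (tparc y) y (tpar y) /\ K (tpar y) /\ dist (tpar y) = (dist y).-1.
Proof.
move=> Ky dp; have [l [e [S1 d1]]] := lab_spec Ky dp.
rewrite /tparc /tpar e; split=> //; split; first exact: links_arcof.
split=> //; exact: (proj2 (tree_arc_comp S1 (links_arcof y l))).
Qed.

Lemma desc_spec y i : K y -> i <= dist y -> K (desc i y) /\ dist (desc i y) = dist y - i.
Proof.
move=> Ky; elim: i => [|i IH] hi; first by rewrite subn0.
have [K1 d1] := IH (ltnW hi); rewrite /desc iterS -/(desc i y).
have [_ [_ [K2 d2]]] := tpar_spec K1 ltac:(rewrite d1; lia).
split=> //; rewrite d2 d1; lia.
Qed.

Lemma desc_walk y i : K y -> i <= dist y ->
  is_walk tree_arc i (fun t => desc t y) (fun t => tparc (desc t y)).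
Proof.
move=> Ky hi t ti; have [K1 d1] := desc_spec Ky (ltnW (leq_trans ti hi)).
have [S1 [l1 _]] := tpar_spec K1 ltac:(rewrite d1; lia).
by rewrite /desc iterS.
Qed.

Lemma conn_desc y i : K y -> i <= dist y -> connected tree_arc y (desc i y).
Proof.
move=> Ky; elim: i => [|i IH] hi; first exact: conn_refl.
have [_ l] := desc_walk Ky hi (ltnSn i).
apply: conn_trans (IH (ltnW hi)) (conn1 (proj1 (desc_walk Ky hi (ltnSn i))) l).
Qed.

Lemma desc_root y : K y -> exists k, desc (dist y) y = phn k.
Proof.
move=> Ky; have [K1 d1] := desc_spec Ky (leqnn _).
apply: dist0_cyc K1 _; by rewrite d1 subnn.
Qed.

(* the descents from two connected points at the same distance meet, since
   both end at the unique cycle node connected to them *)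
Lemma descents_meet a b : K a -> K b -> dist a = dist b -> connected tree_arc a b ->
  exists j, j <= dist a /\ desc j a = desc j b /\ forall i, i < j -> desc i a <> desc i b.
Proof.
move=> Ka Kb dab c.
have ex : exists j, j <= dist a /\ desc j a = desc j b.
  exists (dist a); split=> //.
  have [k0 [_ u]] := Hroot Ka.
  have [ka ea] := desc_root Ka; have [kb eb] := desc_root Kb.
  have c1 : connected tree_arc a (phn ka) by rewrite -ea; exact: conn_desc.
  have c2 : connected tree_arc a (phn kb) by rewrite -eb; apply: conn_trans c _; exact: conn_desc.
  rewrite -dab in eb; rewrite ea eb (u ka c1) (u kb c2) //.
have [j [[jd ej] hmin]] := least_ex ex.
exists j; split=> //; split=> // i ij e; have := hmin i (conj (leq_trans (ltnW ij) jd) e); lia.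
Qed.

(* the "V": descent from [a] for [j] steps, then back up to [b] *)
Definition vee j a b := catv j (fun i => desc i a) (fun i => desc (j - i) b).
Definition vee_arc j a b :=
  cate j (fun i => tparc (desc i a)) (fun i => tparc (desc (j - i.+1) b)).

Lemma vee_walk a b j : K a -> K b -> j <= dist a -> j <= dist b -> desc j a = desc j b ->
  is_walk tree_arc (j + j) (vee j a b) (vee_arc j a b).
Proof.
move=> Ka Kb ja jb e; apply: is_walk_cat; first exact: desc_walk.
  exact: is_walk_rev (desc_walk Kb jb).
by rewrite subn0.
Qed.

Lemma vee_dist a b j i : K a -> K b -> dist a = dist b -> j <= dist a -> i <= j + j ->
  dist (vee j a b i) = dist a - (if i <= j then i else j + j - i).
Proof.
move=> Ka Kb dab ja ij; rewrite /vee /catv; case: leqP => h.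
  by rewrite (proj2 (desc_spec Ka (leq_trans h ja))).
rewrite (proj2 (desc_spec Kb _)); last lia.
rewrite -dab; congr (_ - _); lia.
Qed.

Lemma vee_distinct a b j : K a -> K b -> dist a = dist b -> j <= dist a ->
  (forall i, i < j -> desc i a <> desc i b) ->
  forall i i', i < i' -> i' <= j + j -> vee j a b i <> vee j a b i'.
Proof.
move=> Ka Kb dab ja nm i i' ii' i'j e; have := congr1 dist e.
rewrite !vee_dist //; try lia.
case: (leqP i' j) => h'; case: (leqP i j) => h; try lia.
move=> de; have ei : j + j - i' = i by lia.
apply: (nm i); first lia.
move: e; rewrite /vee /catv h ifN -?ltnNge //.
by have -> : j - (i' - j) = i by lia.
Qed.

Lemma vee_cycle a b L (C : nat -> carrier X) (F : nat -> arc (Cay X)) :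
  K a -> K b -> dist a = dist b -> a <> b -> connected tree_arc a b ->
  0 < L -> C 0 = b -> C L = a ->
  is_walk tree_arc L C F -> (forall i, 0 < i -> i < L -> dist a < dist (C i)) ->
  (forall i i', 0 < i -> i < i' -> i' < L -> C i <> C i') -> has_cycle tree_arc.
Proof.
move=> Ka Kb dab nab c L0 C0 CL wC hCd hCdist.
have [j [jd [mj nm]]] := descents_meet Ka Kb dab c.
have j0 : 0 < j by case: j jd mj nm => // _ e; exfalso; exact: nab e.
apply: (@glue_cycle (Cay X) tree_arc (j + j) L (vee j a b) C (vee_arc j a b) F) => //.
- lia.
- by apply: vee_walk; rewrite -?dab.
- rewrite /vee /catv ifN; last lia.
  by rewrite C0 (_ : j - (j + j - j) = 0) //; lia.
- exact: vee_distinct.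
- move=> i i' ij i0 iL e; have := hCd i' i0 iL; rewrite -e vee_dist //; lia.
Qed.

Lemma dist_adjacent_neq (e : arc (Cay X)) y z : tree_arc e -> links e y z -> dist y <> dist z.
Proof.
move=> Se l dyz; have [Ky Kz] := tree_arc_comp Se l.
case: (classic (y = z)) => [yz|nyz].
  subst z; apply: Hnoc.
  by apply: (@mk_cycle (Cay X) tree_arc 1 (fun _ => y) (fun _ => e)) => //; move=> *; lia.
apply: Hnoc; apply: (@vee_cycle y z 1 (fun i => if i == 0 then z else y) (fun _ => e)) => //.
- exact: conn1 Se l.
- move=> i; rewrite ltnS leqn0 => /eqP -> /=; split=> //; exact: links_sym.
all: move=> *; lia.
Qed.

Lemma parent_arc_unique (e : arc (Cay X)) y z l : K y -> 0 < dist y -> tree_arc e -> links e y z ->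
  dist z = (dist y).-1 -> lab y = Some l -> e = arcof y l.
Proof.
move=> Ky dp Se le dz el; apply: NNPP => ne.
have [S2 d2] := lab_some el; have l2 := links_arcof y l.
have [_ Kz] := tree_arc_comp Se le; have [_ Kz2] := tree_arc_comp S2 l2.
case: (classic (z = endof y l)) => [zz|nzz].
  apply: Hnoc; apply: (@mk_cycle (Cay X) tree_arc 2 (fun i => if i == 1 then z else y)
                        (fun i => if i == 0 then e else arcof y l)) => //.
  - move=> [|[|i]] hi /=; [by split|split=> //|lia].
    rewrite zz; exact: links_sym.
  - move=> i j ij j2; have -> : i = 0 by lia.
    have -> : j = 1 by lia.
    move=> /= yz; move: dz; rewrite -yz; lia.
apply: Hnoc; apply: (@vee_cycle z (endof y l) 2
  (fun i => if i == 0 then endof y l else if i == 1 then y else z)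
  (fun i => if i == 0 then arcof y l else e)) => //.
- by rewrite dz d2.
- exact: conn_trans (conn1 Se (links_sym le)) (conn1 S2 l2).
- move=> [|[|i]] hi /=; [split=> //; exact: links_sym|by split|lia].
- move=> i i0 i2; have -> : i = 1 by lia.
  rewrite /= dz; lia.
all: move=> *; lia.
Qed.

Variables (A B : FnSet n) (q : carrier A -> carrier B) (v : carrier X -> carrier B).
Hypotheses (qe : equivariant q) (qw : weq q) (ve : equivariant v).

Lemma cycle_lift_ex : exists al : 'I_p -> carrier A,
  (forall k, q (al k) = v (phn k)) /\ (forall k, al (ordS k) = act (pha k).2 (al k)).
Proof.
have hc : @is_ghom (cyc p) (Cay B) (fun k => v (phn k)) (fun k => Cay_arc v (pha k)).
  move=> e; have [h1 h2] := Hhom e; rewrite /= in h1 h2; split=> /=; first by rewrite h1.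
  by rewrite -ve h2.
have [_ sur] := qw H0.
have [al [pa [hom [hq hpa]]]] := sur _ _ hc.
exists al; split=> // k.
have [h1 h2] := hom k; rewrite /= in h1 h2.
have := hpa k; rewrite /Cay_arc => [[_ ea]].
by rewrite -h2 h1 ea.
Qed.

Definition cycle_lift := proj1_sig (constructive_indefinite_description _ cycle_lift_ex).
Lemma cycle_lift_q k : q (cycle_lift k) = v (phn k).
Proof. rewrite /cycle_lift; case: (constructive_indefinite_description _ _) => f [] //. Qed.
Lemma cycle_lift_S k : cycle_lift (ordS k) = act (pha k).2 (cycle_lift k).
Proof. rewrite /cycle_lift; case: (constructive_indefinite_description _ _) => f [] //. Qed.

Definition idx y : 'I_p := if pickopt (fun k => phn k = y) is Some k then k else Ordinal H0.

Lemma idx_phn k : idx (phn k) = k.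
Proof.
rewrite /idx; have [k' [-> e]] := pickoptP (ex_intro (fun k' => phn k' = phn k) k erefl).
exact: Hinj.
Qed.

(* [lift_at t y]: transport of the lift of the root of [y] up the [t] parent
   arcs to [y] *)
Fixpoint lift_at t y : carrier A :=
  match t with
  | 0 => cycle_lift (idx y)
  | t'.+1 => match lab y with
             | Some (a, true) => act a (lift_at t' (ainv a y))
             | Some (a, false) => ainv a (lift_at t' (act a y))
             | None => lift_at t' y
             end
  end.

Definition lift y := lift_at (dist y) y.

Lemma lift_at_q t y : K y -> dist y = t -> q (lift_at t y) = v y.
Proof.
elim: t y => [|t IH] y Ky dy /=.
  have [k ->] := dist0_cyc Ky dy; by rewrite idx_phn cycle_lift_q.
have dp : 0 < dist y by rewrite dy.
have [l [el _]] := lab_spec Ky dp.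
have [_ [_ [Kp dpar]]] := tpar_spec Ky dp.
rewrite el; rewrite /tpar el dy /= in Kp dpar.
case: l el Kp dpar => a [] el Kp dpar /=.
  by rewrite qe IH // (equiv_ainv ve) ainvK.
by rewrite (equiv_ainv qe) IH // ve actK.
Qed.

Lemma lift_q y : K y -> q (lift y) = v y.
Proof. move=> Ky; exact: lift_at_q. Qed.

(* Equivariance: along a cycle arc by construction of [cycle_lift]; along a
   tree arc, because it is the parent arc of its farther end. *)
Lemma lift_act y a : K y -> lift (act a y) = act a (lift y).
Proof.
move=> Ky; have Kay := comp_act a Ky.
case: (classic (exists k, pha k = (y, a))) => [[k ek]|nC].
  have [h1 h2] := Hhom k; rewrite ek /= in h1 h2.
  rewrite /lift h2 h1 !dist_cyc /= !idx_phn cycle_lift_S ek //.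
have Se : tree_arc (y, a) by split.
have le : @links (Cay X) (y, a) y (act a y) by left.
have ne := dist_adjacent_neq Se le.
have l1 := dist_lip Se le; have l2 := dist_lip Se (links_sym le).
have [up|down] : dist (act a y) = (dist y).+1 \/ dist y = (dist (act a y)).+1 by lia.
- have dp : 0 < dist (act a y) by rewrite up.
  have [l [el [S1 d1]]] := lab_spec Kay dp.
  have := parent_arc_unique Kay dp Se (links_sym le) ltac:(by rewrite up) el.
  rewrite /lift up /= el; case: l el S1 d1 => a' [] el S1 d1 /= [].
    move=> e1 e2; subst a'; by rewrite actK.
  move=> e1 e2; exfalso; apply: ne; by rewrite -e1.
- have dp : 0 < dist y by rewrite down.
  have [l [el [S1 d1]]] := lab_spec Ky dp.
  have := parent_arc_unique Ky dp Se le ltac:(by rewrite down) el.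
  rewrite /lift down /= el; case: l el S1 d1 => a' [] el S1 d1 /= [].
    move=> e1 e2; subst a'; exfalso; apply: ne.
    have h : act a y = y by rewrite [in LHS]e1 ainvK.
    by rewrite h.
  move=> e2; subst a'; by rewrite ainvK.
Qed.

End RnToLift.

(* Lifts built separately on each component glue into a global lift (the chosen
   lift depends only on the component, which is the same for [y] and [act a y]). *)
Lemma glue_comp_lifts n (X A : FnSet n) (B : Type) (q : carrier A -> B) (v : carrier X -> B) :
  (forall x0, exists h : carrier X -> carrier A,
     (forall y, comp x0 y -> q (h y) = v y) /\
     (forall y a, comp x0 y -> h (act a y) = act a (h y))) ->
  exists h : carrier X -> carrier A, equivariant h /\ forall y, q (h y) = v y.
Proof.
move=> ex; pose hc y := proj1_sig (constructive_indefinite_description _ (ex y)).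
have hP : forall y, (forall z, comp y z -> q (hc y z) = v z) /\
                    (forall z a, comp y z -> hc y (act a z) = act a (hc y z)).
  move=> y; exact: proj2_sig (constructive_indefinite_description _ (ex y)).
exists (fun y => hc y y); split.
- move=> a y /=; have -> : hc (act a y) = hc y by apply: choice_congr; rewrite comp_eq.
  have [_ h2] := hP y; apply: h2; exact: conn_refl.
- move=> y; have [h1 _] := hP y; apply: h1; exact: conn_refl.
Qed.

(* F_n-sets in R_n are cofibrant: the lifting problem only involves the lower
   map [v], which lifts component by component. *)
Lemma in_Rn_cofibrant n (X : FnSet n) : in_Rn X -> cofibrant X.
Proof.
move=> hR A B q qe qw u v ue ve _.
have [h [he hq]] : exists h : carrier X -> carrier A, equivariant h /\ forall y, q (h y) = v y.
  apply: glue_comp_lifts => x0.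
  have [p [phn [pha [H0 [Hhom [Hinj [_ [HK [Hnoc Hroot]]]]]]]]] := hR x0.
  exists (lift x0 H0 Hhom qw ve); split=> [y|y a].
    exact: (lift_q H0 Hhom Hinj Hroot qe qw ve).
  exact: (lift_act H0 Hhom Hinj HK Hnoc Hroot qw ve a).
by exists h; split=> //; split=> // [[]].
Qed.

Theorem proposition6p6 (n : nat) (X : FnSet n) : cofibrant X <-> in_Rn X.
Proof. split; [exact: cofibrant_in_Rn|exact: in_Rn_cofibrant]. Qed.
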